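(* In the power-splitting setting described in the context, let $X_k>0$, $Y_k\ge0$ and $\lambda_k\ge0$. For a nonzero real $\theta$, say the system $S(\theta)$ is feasible if there exist $(\boldsymbol\rho,\mathbf{p},\mathbf{w}_{\mathrm{p}})$ satisfying (F) together with $\sum_n|y_n|^2\ge\lambda_kY_k$, $\sum_nx_n^2|g_n|^2\ge\lambda_kX_k$, and $\theta\,\mathbf{x}\circ\mathbf{g}=\mathbf{y}$. If $S(\theta)$ is feasible for some nonzero real $\theta$, then $S(\theta_k)$ is feasible for $\theta_k=\sqrt{Y_k/X_k}$; that is, the coefficient in the system can be set to $\theta_k=\sqrt{Y_k/X_k}$.
   Context: An access point (HAP) with $K$ antennas and fixed normalized transmit power $p_{\mathrm{o}}>0$ serves $N$ single-antenna relays $\mathcal{N}=\{1,\dots,N\}$ sharing spectrum with $M$ cellular users $\mathcal{C}=\{1,\dots,M\}$. $\mathbf{f}_n\in\mathbb{C}^K$ is the HAP-to-relay-$n$ channel, $\mathbf{g}\in\mathbb{C}^N$ the relays-to-receiver channel, $\eta\in(0,1]$ the energy conversion efficiency. Variables: HAP beamformer $\mathbf{w}_{\mathrm{p}}\in\mathbb{C}^K$ with $\mathbf{W}_{\mathrm{p}}=\mathbf{w}_{\mathrm{p}}\mathbf{w}_{\mathrm{p}}^H$, PS ratios $\boldsymbol\rho\in[0,1]^N$, relay powers $\mathbf{p}\in\mathbb{R}^N_{\ge0}$; $y_n=\sqrt{(1-\rho_n)p_{\mathrm{o}}}\,\mathbf{f}_n^H\mathbf{w}_{\mathrm{p}}$,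 $x_n=\big(p_n/((1-\rho_n)p_{\mathrm{o}}\mathbf{f}_n^H\mathbf{W}_{\mathrm{p}}\mathbf{f}_n+1)\big)^{1/2}$, $\circ$ the entrywise product. Constraints (F): (i) for each $m\in\mathcal{C}$, $\sup_{\mathbb{P}\in\mathcal{P}_m}\mathbb{P}\big(\sum_n|z_{nm}|^2p_n\ge\bar\phi_m\big)\le\zeta$, where $\mathcal{P}_m$ is the set of all distributions of the random channel $\mathbf{z}_m\in\mathbb{C}^N$ (relays to user $m$) with prescribed first- and second-order moments, $\bar\phi_m>0$, $\zeta\in(0,1)$; (ii) $p_n\le\eta p_{\mathrm{o}}\rho_n\mathbf{f}_n^H\mathbf{W}_{\mathrm{p}}\mathbf{f}_n$ for all $n$; (iii) $0\le\rho_n\le1$, $\mathbf{p}\succeq\mathbf{0}$, $\mathrm{Tr}(\mathbf{W}_{\mathrm{p}})\le1$. *)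

From HB Require Import structures.
From mathcomp Require Import all_boot all_order all_algebra.
From mathcomp Require Import all_classical all_reals all_analysis.
From mathcomp Require Import complex.
Set Implicit Arguments. Unset Strict Implicit. Unset Printing Implicit Defensive.
Import Order.TTheory GRing.Theory Num.Theory.
Local Open Scope ring_scope.
Local Open Scope classical_set_scope.

Section PS.
Variable R : realType.
Local Notation C := R[i].

Definition toC (r : R) : C := Complex r 0.

Definition sqmod (z : C) : R := complex.Re z ^+ 2 + complex.Im z ^+ 2.

Definition hconj (m n : nat) (A : 'M[C]_(m, n)) : 'M[C]_(n, m) :=
  (map_mx (@conjc R) A)^T.

Definition Wp (K : nat) (w : 'cV[C]_K) : 'M[C]_K := w *m hconj w.

(* f_n^H W_p f_n (a real number; we take its real part) *)
Definition quadf (K : nat) (fn w : 'cV[C]_K) : R :=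
  complex.Re ((hconj fn *m Wp w *m fn) 0 0).

Definition ysig (K N : nat) (po : R) (f : 'I_N -> 'cV[C]_K) (rho : 'I_N -> R)
  (w : 'cV[C]_K) (n : 'I_N) : C :=
  toC (Num.sqrt ((1 - rho n) * po)) * (hconj (f n) *m w) 0 0.

Definition xsig (K N : nat) (po : R) (f : 'I_N -> 'cV[C]_K) (rho p : 'I_N -> R)
  (w : 'cV[C]_K) (n : 'I_N) : R :=
  Num.sqrt (p n / ((1 - rho n) * po * quadf (f n) w + 1)).

Definition cintegrable (d : measure_display) (T : measurableType d)
  (P : probability T R) (h : T -> C) : Prop :=
  P.-integrable setT (fun t => (complex.Re (h t))%:E) /\
  P.-integrable setT (fun t => (complex.Im (h t))%:E).

Definition cexpect (d : measure_display) (T : measurableType d)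
  (P : probability T R) (h : T -> C) : C :=
  Complex (fine (\int[P]_t (complex.Re (h t))%:E)) (fine (\int[P]_t (complex.Im (h t))%:E)).

(* A distribution is represented
   by a random vector Z on an arbitrary probability space. *)
Definition dr_chance (N : nat) (p : 'I_N -> R) (mu : 'I_N -> C) (Smx : 'M[C]_N)
  (phibar zeta : R) : Prop :=
  forall (d : measure_display) (T : measurableType d) (P : probability T R)
         (Z : 'I_N -> T -> C),
    (forall n, measurable_fun setT (fun t => complex.Re (Z n t)) /\
               measurable_fun setT (fun t => complex.Im (Z n t))) ->
    (forall n, cintegrable P (Z n) /\ cexpect P (Z n) = mu n) ->
    (forall n n', cintegrable P (fun t => Z n t * conjc (Z n' t)) /\
                  cexpect P (fun t => Z n t * conjc (Z n' t)) = Smx n n') ->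
    (P [set t | (phibar <= \sum_(n < N) sqmod (Z n t) * p n)%R] <= zeta%:E)%E.

Definition constraintsF (K N M : nat) (po eta zeta : R)
  (f : 'I_N -> 'cV[C]_K) (mu : 'I_M -> 'I_N -> C) (Smx : 'I_M -> 'M[C]_N)
  (phibar : 'I_M -> R) (rho p : 'I_N -> R) (w : 'cV[C]_K) : Prop :=
  (forall m, dr_chance p (mu m) (Smx m) (phibar m) zeta) /\
  (forall n, p n <= eta * po * rho n * quadf (f n) w) /\
  (forall n, 0 <= rho n <= 1) /\
  (forall n, 0 <= p n) /\
  complex.Re (\tr (Wp w)) <= 1.

Definition feasibleS (K N M : nat) (po eta zeta X Y lam : R)
  (f : 'I_N -> 'cV[C]_K) (g : 'I_N -> C)
  (mu : 'I_M -> 'I_N -> C) (Smx : 'I_M -> 'M[C]_N) (phibar : 'I_M -> R)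
  (theta : R) : Prop :=
  exists (rho p : 'I_N -> R) (w : 'cV[C]_K),
    constraintsF po eta zeta f mu Smx phibar rho p w /\
    lam * Y <= \sum_(n < N) sqmod (ysig po f rho w n) /\
    lam * X <= \sum_(n < N) (xsig po f rho p w n) ^+ 2 * sqmod (g n) /\
    (forall n, toC (theta * xsig po f rho p w n) * g n = ysig po f rho w n).

End PS.

From HB Require Import structures.
From mathcomp Require Import all_boot all_order all_algebra.
From mathcomp Require Import all_classical all_reals all_analysis.
From mathcomp Require Import complex.
From mathcomp Require Import ring lra measurable_realfun.
Import Order.TTheory GRing.Theory Num.Theory.
Local Open Scope ring_scope.

(* Negating w_p flips the sign of y and changes nothing else, so we may assume
   theta > 0; put k = sqrt (Y / X).  Whenever the coupling k x o g = y holds,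
   sum |y_n|^2 = k^2 sum x_n^2 |g_n|^2 with k^2 = Y / X, so the two rate
   constraints become equivalent and it is enough to preserve one of them.
   If theta <= k, scaling the relay powers p by (theta / k)^2 shrinks x by
   theta / k and leaves y, hence its rate constraint, untouched.  If theta > k,
   keep p and forward only the fraction t_n (1 - rho_n) of the received power:
   y_n shrinks by sqrt t_n while x_n grows, hence the rate constraint on x
   survives, and t_n in [0, 1] is the root of a quadratic making
   k x_n = sqrt t_n theta x_n.  Lowering p or raising rho only relaxes (F). *)

Section PowerSplitting.
Set Implicit Arguments.
Unset Strict Implicit.

Variable R : realType.
Local Notation C := R[i].

Lemma toCM (a b : R) : toC a * toC b = toC (a * b).
Proof. by rewrite /toC /=; congr Complex; ring. Qed.

Lemma toCN (a : R) : toC (- a) = - toC a.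
Proof. by apply/eqP; rewrite eq_complex /= oppr0 !eqxx. Qed.

Lemma sqmod_ge0 (z : C) : 0 <= sqmod z.
Proof. by rewrite /sqmod addr_ge0 // sqr_ge0. Qed.

Lemma sqmodN (z : C) : sqmod (- z) = sqmod z.
Proof. by case: z => a b; rewrite /sqmod /= !sqrrN. Qed.

Lemma sqmod_toCM (r : R) (z : C) : sqmod (toC r * z) = r ^+ 2 * sqmod z.
Proof. by case: z => a b; rewrite /sqmod /toC /=; ring. Qed.

Lemma sum_sqmod_coupled N (k : R) (x : 'I_N -> R) (g y : 'I_N -> C) :
  (forall n, toC (k * x n) * g n = y n) ->
  \sum_(n < N) sqmod (y n) = k ^+ 2 * \sum_(n < N) x n ^+ 2 * sqmod (g n).
Proof.
move=> xgy; rewrite mulr_sumr; apply: eq_bigr => n _.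
by rewrite -xgy sqmod_toCM exprMn mulrA.
Qed.

Lemma hconjN m n (A : 'M[C]_(m, n)) : hconj (- A) = - hconj A.
Proof. by apply/matrixP => i j; rewrite !mxE rmorphN. Qed.

Lemma WpN K (w : 'cV[C]_K) : Wp (- w) = Wp w.
Proof. by rewrite /Wp hconjN mulmxN mulNmx opprK. Qed.

Lemma quadf_sqmod K (fn w : 'cV[C]_K) :
  quadf fn w = sqmod ((hconj fn *m w) 0 0).
Proof.
rewrite /quadf /Wp !mulmxA -(mulmxA (hconj fn *m w)) mxE big_ord1.
have -> : (hconj w *m fn) 0 0 = conjc ((hconj fn *m w) 0 0).
  rewrite !mxE rmorph_sum; apply: eq_bigr => k _.
  by rewrite !mxE rmorphM /= conjcK mulrC.
by case: ((hconj fn *m w) 0 0) => a b; rewrite /sqmod /=; ring.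
Qed.

Lemma quadf_ge0 K (fn w : 'cV[C]_K) : 0 <= quadf fn w.
Proof. by rewrite quadf_sqmod sqmod_ge0. Qed.

Lemma quadfN K (fn w : 'cV[C]_K) : quadf fn (- w) = quadf fn w.
Proof. by rewrite /quadf WpN. Qed.

Section Signals.
Variables (K N : nat) (po : R) (f : 'I_N -> 'cV[C]_K) (w : 'cV[C]_K).

Lemma xsigN rho p n : xsig po f rho p (- w) n = xsig po f rho p w n.
Proof. by rewrite /xsig quadfN. Qed.

Lemma ysigN rho n : ysig po f rho (- w) n = - ysig po f rho w n.
Proof. by rewrite /ysig mulmxN mxE mulrN. Qed.

Lemma xsig_scale_power (a : R) rho p n : 0 <= a ->
  xsig po f rho (fun n => a ^+ 2 * p n) w n = a * xsig po f rho p w n.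
Proof.
move=> a0; rewrite /xsig -mulrA sqrtrM ?sqr_ge0 //.
by rewrite sqrtr_sqr ger0_norm.
Qed.

Lemma ysig_scale_fraction (t rho : 'I_N -> R) n : 0 <= t n ->
  ysig po f (fun n => 1 - t n * (1 - rho n)) w n =
  toC (Num.sqrt (t n)) * ysig po f rho w n.
Proof.
move=> t0; rewrite /ysig opprD addNKr opprK -mulrA sqrtrM //.
by rewrite -toCM mulrA.
Qed.

Lemma xsig_scale_fraction (t rho p : 'I_N -> R) n :
  xsig po f (fun n => 1 - t n * (1 - rho n)) p w n =
  Num.sqrt (p n / (t n * ((1 - rho n) * po * quadf (f n) w) + 1)).
Proof. by rewrite /xsig opprD addNKr opprK !mulrA. Qed.

End Signals.

Lemma dr_chance_le N (p q : 'I_N -> R) mu Smx phibar zeta :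
  (forall n, 0 <= q n <= p n) ->
  dr_chance p mu Smx phibar zeta -> dr_chance q mu Smx phibar zeta.
Proof.
move=> qp chance_p d T P Z mZ mean_Z cov_Z.
apply: le_trans (chance_p d T P Z mZ mean_Z cov_Z).
have mS (s : 'I_N -> R) :
    measurable [set t | phibar <= \sum_(n < N) sqmod (Z n t) * s n].
  have mf : measurable_fun setT (fun t => \sum_(n < N) sqmod (Z n t) * s n).
    apply: measurable_sum => n; apply: measurable_funM => //.
    by have [mRe mIm] := mZ n; apply: measurable_funD; apply: measurable_funX.
  by rewrite -preimage_itvcy -[X in measurable X]setTI; apply: mf.
apply: le_measure; rewrite ?inE // => t /= /le_trans; apply.
apply: ler_sum => n _; apply: ler_wpM2l; first exact: sqmod_ge0.
by case/andP: (qp n).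
Qed.

(* The nonnegative root of [u t^2 + t = c], rationalised so that [u = 0] is allowed. *)
Definition pos_root (u c : R) : R := 2 * c / (1 + Num.sqrt (1 + 4 * u * c)).

Lemma pos_rootP (u c : R) : 0 <= u -> 0 <= c -> c <= u + 1 ->
  0 <= pos_root u c <= 1 /\ pos_root u c * (pos_root u c * u + 1) = c.
Proof.
move=> u0 c0 cu; rewrite /pos_root; set S := Num.sqrt _; set t := _ / _.
have S0 : 0 <= S by apply: sqrtr_ge0.
have S2 : S ^+ 2 = 1 + 4 * u * c by rewrite sqr_sqrtr //; nra.
have tS : t * (1 + S) = 2 * c by rewrite /t divfK // lt0r_neq0 //; lra.
have t0 : 0 <= t by rewrite /t divr_ge0 //; lra.
have t1 : t <= 1.
  rewrite /t ler_pdivrMr ?mul1r; last lra.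
  rewrite leNgt; apply/negP => cS.
  have : S ^+ 2 < (2 * c - 1) ^+ 2 by rewrite -subr_gt0 subr_sqr mulr_gt0 //; lra.
  by rewrite S2; nra.
split; first by rewrite t0 t1.
apply: (@mulfI _ ((1 + S) ^+ 2)); first by rewrite expf_neq0 // lt0r_neq0 //; lra.
transitivity (u * (t * (1 + S)) ^+ 2 + (1 + S) * (t * (1 + S))); first by ring.
rewrite tS [RHS](_ : _ = c * (1 + 2 * S) + c * S ^+ 2); last by ring.
by rewrite S2; ring.
Qed.

Lemma sqrt_coupling (k th p u t : R) :
  0 <= k -> 0 < th -> 0 <= p -> 0 <= u -> 0 <= t ->
  t * (t * u + 1) = k ^+ 2 / th ^+ 2 * (u + 1) ->
  k * Num.sqrt (p / (t * u + 1)) = Num.sqrt t * (th * Num.sqrt (p / (u + 1))).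
Proof.
move=> k0 th0 p0 u0 t0 tE.
have mul_sqrt (a b : R) : 0 <= a -> a * Num.sqrt b = Num.sqrt (a ^+ 2 * b).
  by move=> a0; rewrite sqrtrM ?sqr_ge0 // sqrtr_sqr ger0_norm.
rewrite (mul_sqrt k) // (mul_sqrt th) ?ltW // -sqrtrM //; congr Num.sqrt.
have u1 : u + 1 != 0 by rewrite lt0r_neq0 // ltr_wpDl.
have tu1 : t * u + 1 != 0 by rewrite lt0r_neq0 // ltr_wpDl // mulr_ge0.
have -> : k ^+ 2 = t * (t * u + 1) * th ^+ 2 / (u + 1).
  by rewrite tE; field; rewrite u1 lt0r_neq0.
by field; rewrite u1 tu1.
Qed.

Section Feasibility.
Variables (K N M : nat) (po eta zeta X Y lam : R).
Variables (f : 'I_N -> 'cV[C]_K) (g : 'I_N -> C).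
Variables (mu : 'I_M -> 'I_N -> C) (Smx : 'I_M -> 'M[C]_N) (phibar : 'I_M -> R).
Local Notation feasible := (feasibleS po eta zeta X Y lam f g mu Smx phibar).

Lemma feasibleS_opp th : feasible th -> feasible (- th).
Proof.
move=> [rho [p [w [[chance [harvest [rho01 [p0 tr]]]] [rateY [rateX xgy]]]]]].
exists rho, p, (- w); split.
  split=> //; split=> [n|]; first by rewrite quadfN.
  by rewrite WpN.
split; first by under eq_bigr do rewrite ysigN sqmodN.
split; first by under eq_bigr do rewrite xsigN.
by move=> n; rewrite xsigN ysigN mulNr toCN mulNr xgy.
Qed.

Hypotheses (po_ge0 : 0 <= po) (eta_ge0 : 0 <= eta).
Hypotheses (X_gt0 : 0 < X) (Y_ge0 : 0 <= Y).
Local Notation k := (Num.sqrt (Y / X)).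

Lemma sqr_sqrt_YX : k ^+ 2 = Y / X.
Proof. by rewrite sqr_sqrtr // divr_ge0 // ltW. Qed.

Lemma YX_mul_lamX : Y / X * (lam * X) = lam * Y.
Proof. by field; rewrite gt_eqF. Qed.

Lemma feasibleS_increase_theta th : 0 < th <= k -> feasible th -> feasible k.
Proof.
move=> /andP[th0 thk] [rho [p [w [[chance [harvest [rho01 [p0 tr]]]] [rateY [rateX xgy]]]]]].
have k0 : 0 < k := lt_le_trans th0 thk.
set a := th / k; set q := fun n => a ^+ 2 * p n.
have a0 : 0 <= a by rewrite divr_ge0 // ltW.
have qp n : 0 <= q n <= p n.
  by rewrite mulr_ge0 ?sqr_ge0 //= ler_piMl // expr_le1 // ler_pdivrMr // mul1r.
have xgy' n : toC (k * xsig po f rho q w n) * g n = ysig po f rho w n.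
  by rewrite xsig_scale_power // mulrA mulrCA divff ?mulr1 ?gt_eqF.
exists rho, q, w; split.
  split; first by move=> m; exact: dr_chance_le (chance m).
  split; first by move=> n; apply: le_trans (harvest n); case/andP: (qp n).
  by do !split => //; move=> n; case/andP: (qp n).
do !split => //.
have YX : 0 < Y / X by rewrite -sqrtr_gt0.
rewrite -(ler_pM2l YX) YX_mul_lamX -sqr_sqrt_YX -(sum_sqmod_coupled xgy').
exact: rateY.
Qed.

Lemma feasibleS_decrease_theta th : 0 < th -> k <= th -> feasible th -> feasible k.
Proof.
move=> th0 kth [rho [p [w [[chance [harvest [rho01 [p0 tr]]]] [rateY [rateX xgy]]]]]].
set r := k ^+ 2 / th ^+ 2.
have r0 : 0 <= r by rewrite divr_ge0 ?sqr_ge0.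
have r1 : r <= 1.
  by rewrite /r ler_pdivrMr ?exprn_gt0 // mul1r ler_sqr ?nnegrE ?sqrtr_ge0 ?(ltW th0).
set u := fun n => (1 - rho n) * po * quadf (f n) w.
have u0 n : 0 <= u n.
  by case/andP: (rho01 n) => _ ?; rewrite !mulr_ge0 ?quadf_ge0 ?subr_ge0.
set t := fun n => pos_root (u n) (r * (u n + 1)).
have tP n : 0 <= t n <= 1 /\ t n * (t n * u n + 1) = r * (u n + 1).
  have u1 : 0 <= u n + 1 by rewrite addr_ge0 ?u0.
  by apply: pos_rootP; [exact: u0 | exact: mulr_ge0 | exact: ler_piMl].
set rho' := fun n => 1 - t n * (1 - rho n).
have rho'P n : rho n <= rho' n <= 1.
  have [/andP[t0 t1] _] := tP n; have /andP[rho0 rho1] := rho01 n.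
  by rewrite /rho' gerBl mulr_ge0 ?subr_ge0 // andbT; nra.
have xgy' n : toC (k * xsig po f rho' p w n) * g n = ysig po f rho' w n.
  have [/andP[t0 _] tE] := tP n.
  rewrite xsig_scale_fraction ysig_scale_fraction // -/(u n).
  by rewrite (sqrt_coupling (sqrtr_ge0 _) th0 (p0 n) (u0 n) t0 tE) -toCM -mulrA xgy.
have x_le n : xsig po f rho p w n ^+ 2 <= xsig po f rho' p w n ^+ 2.
  have [/andP[t0 t1] _] := tP n.
  have u1 : 0 < u n + 1 by rewrite ltr_wpDl.
  have tu1 : 0 < t n * u n + 1 by rewrite ltr_wpDl // mulr_ge0.
  rewrite xsig_scale_fraction -/(u n) /xsig -/(u n).
  rewrite !sqr_sqrtr ?divr_ge0 ?(ltW u1) ?(ltW tu1) // ler_wpM2l // lef_pV2 ?posrE //.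
  by rewrite lerD2r ler_piMl.
have rateX' : lam * X <= \sum_(n < N) xsig po f rho' p w n ^+ 2 * sqmod (g n).
  by apply: (le_trans rateX); apply: ler_sum => n _; rewrite ler_wpM2r ?sqmod_ge0.
exists rho', p, w; split.
  split=> //; split.
    move=> n; apply: (le_trans (harvest n)); rewrite ler_wpM2r ?quadf_ge0 //.
    by rewrite ler_wpM2l ?mulr_ge0 //; case/andP: (rho'P n).
  split=> // n; case/andP: (rho01 n) (rho'P n) => r0' _ /andP[? ->].
  by rewrite andbT (le_trans r0').
do !split => //.
by rewrite (sum_sqmod_coupled xgy') sqr_sqrt_YX -YX_mul_lamX ler_wpM2l // divr_ge0 // ltW.
Qed.

Lemma feasibleS_pos_theta th : 0 < th -> feasible th -> feasible k.
Proof.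
move=> th0; have [thk|kth] := lerP th k.
  by apply: feasibleS_increase_theta; rewrite th0.
exact: feasibleS_decrease_theta (ltW kth).
Qed.

Lemma feasibleS_theta th : th != 0 -> feasible th -> feasible k.
Proof.
case: (ltrgt0P th) => // [th_gt0|th_lt0] _ feas; first exact: feasibleS_pos_theta feas.
by apply: (@feasibleS_pos_theta (- th)); [rewrite oppr_gt0 | exact: feasibleS_opp].
Qed.

End Feasibility.
End PowerSplitting.

Theorem proposition6 (R : realType) (K N M : nat) (po eta zeta X Y lam : R)
  (f : 'I_N -> 'cV[R[i]]_K) (g : 'I_N -> R[i])
  (mu : 'I_M -> 'I_N -> R[i]) (Smx : 'I_M -> 'M[R[i]]_N) (phibar : 'I_M -> R) :
  0 < po -> 0 < eta <= 1 -> 0 < zeta < 1 -> (forall m, 0 < phibar m) ->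
  0 < X -> 0 <= Y -> 0 <= lam ->
  (exists theta : R, theta != 0 /\
     feasibleS po eta zeta X Y lam f g mu Smx phibar theta) ->
  feasibleS po eta zeta X Y lam f g mu Smx phibar (Num.sqrt (Y / X)).
Proof.
move=> po_gt0 /andP[eta_gt0 _] _ _ X_gt0 Y_ge0 _ [th [th_neq0 feas]].
exact: feasibleS_theta (ltW po_gt0) (ltW eta_gt0) X_gt0 Y_ge0 th th_neq0 feas.
Qed.
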